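(* Let $P$ be a finite partially ordered set having an infimum operation $\wedge$ and a greatest element $\top$, put $P^\times=P\setminus\{\top\}$, and let $U\colon P\to\mathbf{Ab}$ be a presheaf admitting an extender $\lambda$. Then the homomorphism $U(\top)\to\lim_{p\in P^\times}U(p)$, $u\mapsto(u|_p)_{p\in P^\times}$, is surjective.
   Context: A presheaf $U\colon P\to\mathbf{Ab}$ is a contravariant functor: abelian groups $U(p)$ and restriction homomorphisms $u\mapsto u|_q\colon U(p)\to U(q)$ for $p\ge q$, functorial. $\lim_{p\in P^\times}U(p)$ is the group of families $(u_p)_{p\in P^\times}$, $u_p\in U(p)$, with $u_p|_q=u_q$ whenever $p\ge q$. An extender for $U$ is a collection of homomorphisms $\lambda^q_p\colon U(q)\to U(p)$, for $p,q\in P$ with $p\ge q$, such that for all $p,q\in P$ and $x\in U(q)$: $\lambda^q_p(x)|_q=x$ whenever $p\ge q$, and $\lambda^q_\top(x)|_p=\lambda^{p\wedge q}_p(x|_{p\wedge q})$. *)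

From HB Require Import structures.
From mathcomp Require Import all_boot all_order all_algebra.
Set Implicit Arguments. Unset Strict Implicit. Unset Printing Implicit Defensive.
Import Order.TTheory GRing.Theory.

Local Open Scope order_scope.

(* The
   restriction maps are given as a total family [res p q : U p -> U q] of
   additive maps, only meaningful (and only constrained) when q <= p. *)
Definition is_presheaf d (P : porderType d) (U : P -> zmodType)
    (res : forall p q : P, {additive U p -> U q}) : Prop :=
  (forall (p : P) (x : U p), res p p x = x) /\
  (forall (p q r : P) (x : U p), r <= q -> q <= p ->
      res q r (res p q x) = res p r x).

Definition is_extender d (P : tMeetSemilatticeType d) (U : P -> zmodType)
    (res : forall p q : P, {additive U p -> U q})
    (lam : forall q p : P, {additive U q -> U p}) : Prop :=
  (forall (p q : P) (x : U q), q <= p -> res p q (lam q p x) = x) /\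
  (forall (p q : P) (x : U q),
      res \top p (lam q \top x) = lam (p `&` q) p (res q (p `&` q) x)).

(* Elements of lim_{p in P^x} U(p), P^x = P \ {top}: compatible families
   indexed by p != top (values at top are irrelevant). *)
Definition in_lim_Ptimes d (P : tMeetSemilatticeType d) (U : P -> zmodType)
    (res : forall p q : P, {additive U p -> U q})
    (u : forall p : P, U p) : Prop :=
  forall p q : P, p != \top -> q != \top -> q <= p -> res p q (u p) = u q.

From HB Require Import structures.
From mathcomp Require Import all_boot all_order all_algebra.
Set Implicit Arguments. Unset Strict Implicit. Unset Printing Implicit Defensive.
Import Order.TTheory GRing.Theory.
Local Open Scope order_scope.

(* Measure how far v in U(top) is from restricting to u by the defect family
   w_v(p) = u_p - v|_p on P^x, which is again compatible.  Replacing v by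
   v + lam^q_top(w_v(q)) kills the defect at q and, by the second extender
   axiom, changes the defect at p by lam^{p/\q}_p(w_v(p)|_{p/\q}), which is
   zero wherever w_v(p) already was.  Correcting once at each element of the
   finite set P^x gives the required preimage. *)

Section ExtenderCorrection.

Variables (d : Order.disp_t) (P : tMeetSemilatticeType d) (U : P -> zmodType).
Variables (res : forall p q : P, {additive U p -> U q})
  (lam : forall q p : P, {additive U q -> U p}).

Hypothesis res_id : forall (p : P) (x : U p), res p p x = x.
Hypothesis res_comp : forall (p q r : P) (x : U p),
  r <= q -> q <= p -> res q r (res p q x) = res p r x.
Hypothesis lam_res : forall (p q : P) (x : U q), q <= p -> res p q (lam q p x) = x.
Hypothesis lam_top : forall (p q : P) (x : U q),
  res \top p (lam q \top x) = lam (p `&` q) p (res q (p `&` q) x).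

Variable u : forall p : P, U p.
Hypothesis u_compat : in_lim_Ptimes res u.

Lemma lam_id (p : P) (x : U p) : lam p p x = x.
Proof. by have := lam_res x (lexx p); rewrite res_id. Qed.

Lemma le_neq_top (p r : P) : p != \top -> r <= p -> r != \top.
Proof. by move=> + rp; apply: contra => /eqP rT; rewrite eq_le lex1 -rT. Qed.

Definition defect (v : U \top) (p : P) : U p := (u p - res \top p v)%R.

Lemma defect_eq0 (v : U \top) (p : P) : (defect v p == 0)%R = (res \top p v == u p).
Proof. by rewrite subr_eq0 eq_sym. Qed.

Lemma res_defect (v : U \top) (p r : P) :
  p != \top -> r <= p -> res p r (defect v p) = defect v r.
Proof.
by move=> pT rp; rewrite raddfB /= u_compat ?(le_neq_top pT rp) // res_comp ?lex1.
Qed.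

Definition extend (v : U \top) (q : P) : U \top := (v + lam q \top (defect v q))%R.

Lemma defect_extend (v : U \top) (p q : P) : q != \top ->
  defect (extend v q) p = (defect v p - lam (p `&` q) p (defect v (p `&` q)))%R.
Proof. by move=> qT; rewrite /defect raddfD /= lam_top res_defect ?leIr // opprD addrA. Qed.

Lemma defect_extend_self (v : U \top) (q : P) : q != \top -> defect (extend v q) q = 0%R.
Proof. by move=> qT; rewrite defect_extend // meetxx lam_id subrr. Qed.

Lemma defect_extend_eq0 (v : U \top) (p q : P) : p != \top -> q != \top ->
  defect v p = 0%R -> defect (extend v q) p = 0%R.
Proof.
move=> pT qT vp0.
by rewrite defect_extend // -(res_defect v pT (leIl p q)) vp0 !raddf0 addr0.
Qed.

Lemma defect_eq0_on_seq (t : seq P) :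
  exists v : U \top, {in t, forall p, p != \top -> defect v p = 0%R}.
Proof.
elim: t => [|q t [v vt0]]; first by exists 0%R.
have [-> | qT] := eqVneq q \top.
  by exists v => p; rewrite in_cons => /predU1P [-> /eqP //|/vt0].
exists (extend v q) => p; rewrite in_cons => /predU1P [-> _|pt pT].
  exact: defect_extend_self.
exact: defect_extend_eq0 (vt0 _ pt pT).
Qed.

End ExtenderCorrection.

Theorem lemma9p2 (d : Order.disp_t) (P : tMeetSemilatticeType d)
    (P_finite : exists s : seq P, forall p : P, p \in s)
    (U : P -> zmodType)
    (res : forall p q : P, {additive U p -> U q})
    (lam : forall q p : P, {additive U q -> U p}) :
  is_presheaf res -> is_extender res lam ->
  forall u : forall p : P, U p, in_lim_Ptimes res u ->
  exists v : U \top, forall p : P, p != \top -> res \top p v = u p.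
Proof.
move=> [res_id res_comp] [lam_res lam_top] u u_compat.
have [s s_all] := P_finite.
have [v vs0] := defect_eq0_on_seq res_id res_comp lam_res lam_top u_compat s.
by exists v => p pT; apply/eqP; rewrite -defect_eq0 vs0.
Qed.
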